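(* Let $g\in U_n$. There exists $\zeta\in\mathfrak{u}_n$ with $\exp(\zeta)=g$ such that $[\zeta,\xi]=0$ for every $\xi\in\mathfrak{u}_n$ with $\exp(\xi)=g$.
   Context: $\mathfrak{u}_n$ is the Lie algebra of $U_n$ (skew-Hermitian $n\times n$ matrices) and $\exp$ is the matrix exponential. *)

(* Complex numbers: C = R[i] (mathcomp-real-closed) over R : realType.
   Topology on R[i]: the norm (modulus) topology, copied from R[i]^o;
   matrices get the product topology (matrix_topology.v). *)
From HB Require Import structures.
From mathcomp Require Import all_boot all_order all_algebra.
From mathcomp Require Import all_classical all_reals all_analysis.
From mathcomp Require Import complex.
Import Order.TTheory GRing.Theory Num.Theory.
Import numFieldTopology.Exports numFieldNormedType.Exports.
Set Implicit Arguments. Unset Strict Implicit. Unset Printing Implicit Defensive.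
Local Open Scope ring_scope.
Local Open Scope classical_set_scope.

#[non_forgetful_inheritance]
HB.instance Definition _ (R : rcfType) := PseudoPointedMetric.copy R[i] (R[i])^o.

Definition adjmx (R : rcfType) (n : nat) (A : 'M[R[i]]_n) : 'M[R[i]]_n :=
  (map_mx (@conjc R) A)^T.

Definition unitary_mx (R : rcfType) (n : nat) (g : 'M[R[i]]_n) : Prop :=
  g *m adjmx g = 1%:M /\ adjmx g *m g = 1%:M.

Definition skew_hermitian_mx (R : rcfType) (n : nat) (X : 'M[R[i]]_n) : Prop :=
  adjmx X = - X.

Definition mexp_partial (R : rcfType) (n : nat) (A : 'M[R[i]]_n) (N : nat)
  : 'M[R[i]]_n :=
  \sum_(k < N) ((k`!)%:R)^-1 *: (A ^+ k).

Definition mexp (R : realType) (n : nat) (A : 'M[R[i]]_n) : 'M[R[i]]_n :=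
  lim (mexp_partial A @ \oo).

Definition lie_bracket (R : rcfType) (n : nat) (X Y : 'M[R[i]]_n) : 'M[R[i]]_n :=
  X *m Y - Y *m X.

(* Diagonalise g unitarily, g = V^* diag(d) V.  Its eigenvalues have modulus 1, so
   d_j = exp(i carg d_j) for a fixed branch carg of the argument, and we take
   zeta = V^* diag(i carg d) V.  A skew-Hermitian xi is unitarily diagonalisable too,
   hence commutes with its exponential g; conjugated by V it commutes with diag(d),
   and therefore with diag(f o d) for every function f, in particular with
   V zeta V^* = diag(i carg o d). *)

From HB Require Import structures.
From mathcomp Require Import all_boot all_order all_algebra.
From mathcomp Require Import all_classical all_reals all_analysis.
From mathcomp Require Import complex spectral sesquilinear lra.
Import Order.TTheory GRing.Theory Num.Theory Num.Def.
Import numFieldTopology.Exports numFieldNormedType.Exports.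
Set Implicit Arguments. Unset Strict Implicit. Unset Printing Implicit Defensive.
Local Open Scope ring_scope.
Local Open Scope classical_set_scope.

Lemma diag_mx_comm_map (R : idomainType) n (d : 'rV[R]_n) (M : 'M[R]_n)
    (f : R -> R) :
  M *m diag_mx d = diag_mx d *m M ->
  M *m diag_mx (map_mx f d) = diag_mx (map_mx f d) *m M.
Proof.
move=> /matrixP Md_comm; apply/matrixP => i j; have := Md_comm i j.
rewrite !mul_diag_mx !mul_mx_diag !mxE.
have [-> _|Mij_neq0 eq_d] := eqVneq (M i j) 0; first by rewrite mul0r mulr0.
rewrite [d 0 i * _]mulrC in eq_d.
by rewrite (mulfI Mij_neq0 eq_d) mulrC.
Qed.

Lemma diag_mxX (R : pzSemiRingType) n (d : 'rV[R]_n) k :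
  diag_mx d ^+ k = diag_mx (\row_j d 0 j ^+ k).
Proof.
elim: k => [|k IHk].
  by rewrite expr0 -idmxE -diag_const_mx; congr diag_mx; apply/rowP => j; rewrite !mxE.
rewrite exprS IHk -mulmxE mulmx_diag; congr diag_mx.
by apply/rowP => j; rewrite !mxE exprS.
Qed.

Section UnitaryConjugation.
Local Open Scope sesquilinear_scope.
Variables (C : numClosedFieldType) (n : nat).
Implicit Types (V A B X : 'M[C]_n) (d : 'rV[C]_n).

Definition uconj V A := V^t* *m A *m V.

Lemma normalmx_uconj_diag A : A \is normalmx ->
  exists V d, V \is unitarymx /\ A = uconj V (diag_mx d).
Proof.
move=> /orthomx_spectralP A_diag; exists (spectralmx A), (spectral_diag A).
by rewrite /uconj -invmx_unitary ?spectral_unitarymx.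
Qed.

Variables (V : 'M[C]_n) (V_unitary : V \is unitarymx).

Lemma mul_trC_unitarymx : V^t* *m V = 1%:M.
Proof. by rewrite -[V^t*]mul1mx mulmxKtV. Qed.

Lemma uconjM A B : uconj V A *m uconj V B = uconj V (A *m B).
Proof. by rewrite /uconj !mulmxA mulmxtVK. Qed.

Lemma uconj1 : uconj V 1%:M = 1%:M.
Proof. by rewrite /uconj mulmx1 mul_trC_unitarymx. Qed.

Lemma uconjK X : uconj V (V *m X *m V^t*) = X.
Proof. by rewrite /uconj !mulmxA mul_trC_unitarymx mul1mx mulmxKtV. Qed.

Lemma uconjKV A : V *m uconj V A *m V^t* = A.
Proof. by rewrite /uconj !mulmxA (unitarymxP _) // mul1mx mulmxtVK. Qed.

Lemma uconj_inj : injective (uconj V).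
Proof. exact: (can_inj (g := fun A => V *m A *m V^t*) uconjKV). Qed.

Lemma uconj_adj A : (uconj V A)^t* = uconj V (A^t*).
Proof. by rewrite /uconj !trmx_mul !map_mxM trmxCK mulmxA. Qed.

Lemma uconj_comm A B :
  A *m B = B *m A -> uconj V A *m uconj V B = uconj V B *m uconj V A.
Proof. by move=> AB; rewrite !uconjM AB. Qed.

Lemma uconjX A k : (uconj V A) ^+ k = uconj V (A ^+ k).
Proof.
elim: k => [|k IHk]; first by rewrite !expr0 uconj1.
by rewrite !exprS IHk -!mulmxE uconjM.
Qed.

Lemma uconjN A : uconj V (- A) = - uconj V A.
Proof. by rewrite /uconj mulmxN mulNmx. Qed.

Lemma uconj_diag_adj d :
  (uconj V (diag_mx d))^t* = uconj V (diag_mx (map_mx conjC d)).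
Proof. by rewrite uconj_adj tr_diag_mx map_diag_mx. Qed.

Lemma uconj_diag_unitary d : uconj V (diag_mx d) \is unitarymx ->
  forall j, d 0 j * (d 0 j)^* = 1.
Proof.
move=> /unitarymxP; rewrite uconj_diag_adj uconjM mulmx_diag -uconj1.
move=> /uconj_inj /matrixP eq_diag j.
by have := eq_diag j j; rewrite !mxE eqxx !mulr1n.
Qed.

Lemma uconj_diag_skewP d :
  (uconj V (diag_mx d))^t* = - uconj V (diag_mx d) <-> map_mx conjC d = - d.
Proof.
rewrite uconj_diag_adj -uconjN -linearN; split=> [/uconj_inj|-> //].
move=> /matrixP eq_diag; apply/rowP => j.
by have := eq_diag j j; rewrite !mxE eqxx !mulr1n.
Qed.

Lemma uconj_diag_comm_map X d (f : C -> C) :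
  X *m uconj V (diag_mx d) = uconj V (diag_mx d) *m X ->
  X *m uconj V (diag_mx (map_mx f d)) = uconj V (diag_mx (map_mx f d)) *m X.
Proof.
rewrite -(uconjK X) !uconjM => /uconj_inj /diag_mx_comm_map comm_fd.
by rewrite comm_fd.
Qed.

End UnitaryConjugation.

Section ComplexExponential.
Variable R : realType.
Local Open Scope complex_scope.

Lemma normc_real (r : R) : `|r%:C| = `|r|%:C.
Proof. by rewrite normc_def /= expr0n /= addr0 sqrtr_sqr. Qed.

Lemma real_complex_continuous : continuous (real_complex R).
Proof.
move=> x; apply/(@cvgrPdist_lt _ R[i]^o) => -[e1 e2].
rewrite ltcE /= => /andP[/eqP -> e1_gt0].
near=> y; rewrite -rmorphB normc_real ltcE /= eqxx /=.
by near: y; exact: cvgr_dist_lt.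
Unshelve. all: by end_near. Qed.

Lemma cvg_Complex (u v : nat -> R) a b : u @ \oo --> a -> v @ \oo --> b ->
  (fun k => Complex (u k) (v k)) @ \oo --> Complex a b.
Proof.
move=> u_a v_b; rewrite [Complex a b]complexE.
under eq_fun do rewrite [Complex _ _]complexE.
apply: (@cvgD _ R[i]^o); last apply: cvgMl_tmp.
  by apply: (continuous_cvg _ _ u_a); exact: real_complex_continuous.
by apply: (continuous_cvg _ _ v_b); exact: real_complex_continuous.
Qed.

Definition cexp_partial (z : R[i]) (N : nat) : R[i] :=
  \sum_(k < N) (k`!%:R)^-1 * z ^+ k.

Definition expi (t : R) : R[i] := Complex (cos t) (sin t).

Lemma exp_coeff_iR (t : R) k :
  (k`!%:R)^-1 * (Complex 0 t) ^+ k = Complex (cos_coeff t k) (sin_coeff t k).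
Proof.
have sqr_it : (Complex 0 t) ^+ 2 = (- t ^+ 2)%:C.
  by apply/eqP; rewrite expr2 eq_complex /= !mul0r mulr0 sub0r addr0 expr2 !eqxx.
have it_even m : (Complex 0 t) ^+ m.*2 = ((-1) ^+ m * t ^+ m.*2)%:C.
  by rewrite -mul2n exprM sqr_it -rmorphXn /= -[- t ^+ 2]mulN1r exprMn -exprM.
have it_odd m : (Complex 0 t) ^+ m.*2.+1 = Complex 0 ((-1) ^+ m * t ^+ m.*2.+1).
  apply/eqP; rewrite exprSr it_even eq_complex /= exprSr.
  by rewrite !mulr0 !mul0r subr0 addr0 mulrA !eqxx.
have -> : (k`!%:R : R[i])^-1 = (k`!%:R^-1 : R)%:C by rewrite fmorphV rmorph_nat.
rewrite /cos_coeff /sin_coeff -(odd_double_half k); case: (odd k) => /=.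
  rewrite it_odd odd_double /= doubleK; apply/eqP.
  by rewrite eq_complex /= !mul0r !mulr0 subr0 addr0 mul1r mulrC !eqxx.
rewrite add0n it_even odd_double /= doubleK; apply/eqP.
by rewrite eq_complex /= !mul0r !mulr0 subr0 addr0 mul1r mulrC !eqxx.
Qed.

Lemma cvg_cexp_partial_iR (t : R) : cexp_partial (Complex 0 t) @ \oo --> expi t.
Proof.
have -> : cexp_partial (Complex 0 t) =
    fun N => Complex (series (cos_coeff t) N) (series (sin_coeff t) N).
  apply/funext => N; rewrite /cexp_partial /series /=.
  under eq_bigr do rewrite exp_coeff_iR.
  elim: N => [|N IH]; first by rewrite big_ord0 !big_geq.
  by rewrite big_ord_recr /= IH !(big_nat_recr N).
apply: cvg_Complex; rewrite ?cos.unlock ?sin.unlock.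
  exact: is_cvg_series_cos_coeff.
exact: is_cvg_series_sin_coeff.
Qed.

(* The argument of z in (-pi, pi], correct for |z| = 1. *)
Definition carg (z : R[i]) : R :=
  if 0 <= complex.Im z then acos (complex.Re z) else - acos (complex.Re z).

Lemma expi_carg (z : R[i]) : z * z^* = 1 -> expi (carg z) = z.
Proof.
case: z => a b /(congr1 (@complex.Re R)) /= norm1.
have ab1 : a ^+ 2 + b ^+ 2 = 1 by rewrite -norm1 !expr2 mulrN opprK.
have a_bound : -1 <= a <= 1 by apply/andP; split; nra.
have sin_acos_a : sin (acos a) = `|b|.
  by rewrite sin_acos // -ab1 addrC addKr sqrtr_sqr.
rewrite /expi /carg /=; case: ifP => b_ge0.
  by rewrite acosK // sin_acos_a ger0_norm.
by rewrite cosN sinN acosK // sin_acos_a ltr0_norm ?opprK // ltNge b_ge0.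
Qed.

End ComplexExponential.

Lemma cvg_mx_entrywise {T : Type} (F : set_system T) {FF : Filter F}
    (U : topologicalType) m n (u : T -> 'M[U]_(m, n)) (L : 'M[U]_(m, n)) :
  (forall i j, (fun x => u x i j) @ F --> L i j) -> u @ F --> L.
Proof.
move=> u_L A [P P_nbhs sPA]; apply: filterS sPA _.
by apply: filter_forall => i; apply: filter_forall => j; exact: u_L.
Qed.

Section MatrixExponential.
Variables (R : realType) (n : nat).
Implicit Types (V A : 'M[R[i]]_n) (d e : 'rV[R[i]]_n).

Lemma mexp_partial_uconj V A N : V \is unitarymx ->
  mexp_partial (uconj V A) N = uconj V (mexp_partial A N).
Proof.
move=> V_unitary; rewrite /mexp_partial {2}/uconj mulmx_sumr mulmx_suml.
by apply: eq_bigr => k _; rewrite uconjX // /uconj scalemxAl scalemxAr.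
Qed.

Lemma mexp_partial_diag d N :
  mexp_partial (diag_mx d) N = diag_mx (\row_j cexp_partial (d 0 j) N).
Proof.
rewrite /mexp_partial /cexp_partial; under eq_bigr do rewrite diag_mxX -linearZ.
rewrite -linear_sum; congr diag_mx; apply/rowP => j.
by rewrite !mxE summxE; apply: eq_bigr => k _; rewrite !mxE.
Qed.

Lemma cvg_uconj_diag V (u : nat -> 'rV[R[i]]_n) (v : 'rV[R[i]]_n) :
  (forall j, (fun N => u N 0 j) @ \oo --> v 0 j) ->
  (fun N => uconj V (diag_mx (u N))) @ \oo --> uconj V (diag_mx v).
Proof.
move=> u_v; apply: cvg_mx_entrywise => i j; rewrite /uconj mxE.
under eq_fun do rewrite mxE.
apply: (cvg_big (@add_continuous R[i]^o)) => k _.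
rewrite !mul_mx_diag !mxE.
under eq_fun do rewrite !mul_mx_diag !mxE.
by apply: cvgMr_tmp; apply: cvgMl_tmp; exact: u_v.
Qed.

Lemma mexp_uconj_diag V d e : V \is unitarymx ->
  (forall j, cexp_partial (d 0 j) @ \oo --> e 0 j) ->
  mexp (uconj V (diag_mx d)) = uconj V (diag_mx e).
Proof.
move=> V_unitary d_e; apply: cvg_lim; first exact: norm_hausdorff.
have -> : mexp_partial (uconj V (diag_mx d)) =
    fun N => uconj V (diag_mx (\row_j cexp_partial (d 0 j) N)).
  by apply/funext => N; rewrite mexp_partial_uconj // mexp_partial_diag.
apply: cvg_uconj_diag => j; under eq_fun do rewrite mxE.
exact: d_e.
Qed.

End MatrixExponential.

Section UnitaryGroup.
Local Open Scope sesquilinear_scope.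
Variables (R : rcfType) (n : nat).
Implicit Types (g X : 'M[R[i]]_n).

Lemma adjmxE X : adjmx X = X^t*.
Proof. by rewrite /adjmx map_trmx. Qed.

Lemma unitary_mx_unitarymx g : unitary_mx g -> g \is unitarymx.
Proof. by move=> [g_adj _]; apply/unitarymxP; rewrite -adjmxE. Qed.

Lemma unitary_mx_normal g : unitary_mx g -> g \is normalmx.
Proof. by move=> [g_adj adj_g]; apply/normalmxP; rewrite -adjmxE g_adj adj_g. Qed.

Lemma skew_hermitian_mx_normal X : skew_hermitian_mx X -> X \is normalmx.
Proof. by move=> X_skew; apply/normalmxP; rewrite -adjmxE X_skew mulmxN mulNmx. Qed.

End UnitaryGroup.

Lemma conjC_eq_oppP (R : rcfType) (z : R[i]) :
  z^* = - z <-> z = Complex 0 (complex.Im z).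
Proof.
case: z => a b /=; split=> [/eqP|[->]].
  by rewrite eq_complex /= => /andP[/eqP a_eq _]; congr Complex; lra.
by apply/eqP; rewrite eq_complex /= oppr0 !eqxx.
Qed.

Lemma skew_hermitian_mx_comm_mexp (R : realType) n (X : 'M[R[i]]_n) :
  skew_hermitian_mx X -> X *m mexp X = mexp X *m X.
Proof.
move=> X_skew.
have [W [e [W_unitary XE]]] := normalmx_uconj_diag (skew_hermitian_mx_normal X_skew).
have e_imag j : e 0 j = Complex 0 (complex.Im (e 0 j)).
  move: X_skew; rewrite /skew_hermitian_mx adjmxE XE => /(uconj_diag_skewP W_unitary).
  by move=> /rowP /(_ j); rewrite !mxE => /conjC_eq_oppP.
rewrite XE (mexp_uconj_diag (e := \row_j expi (complex.Im (e 0 j)))) //.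
  by rewrite uconj_comm // diag_mxC.
by move=> j; rewrite mxE {1}e_imag; exact: cvg_cexp_partial_iR.
Qed.

Theorem mainTheorem3 (R : realType) (n : nat) (g : 'M[R[i]]_n) :
  unitary_mx g ->
  exists zeta : 'M[R[i]]_n,
    [/\ skew_hermitian_mx zeta, mexp zeta = g &
        forall xi : 'M[R[i]]_n,
          skew_hermitian_mx xi -> mexp xi = g -> lie_bracket zeta xi = 0].
Proof.
move=> g_unitary.
have [V [d [V_unitary gE]]] := normalmx_uconj_diag (unitary_mx_normal g_unitary).
have d_unit : forall j, d 0 j * (d 0 j)^* = 1.
  by apply: (uconj_diag_unitary V_unitary); rewrite -gE; exact: unitary_mx_unitarymx.
pose zeta := uconj V (diag_mx (map_mx (fun z => Complex 0 (carg z)) d)).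
exists zeta; split.
- rewrite /skew_hermitian_mx adjmxE; apply/uconj_diag_skewP => //.
  by apply/rowP => j; rewrite !mxE; apply/conjC_eq_oppP.
- rewrite gE; apply: mexp_uconj_diag => // j.
  by rewrite mxE -{2}(expi_carg (d_unit j)); exact: cvg_cexp_partial_iR.
move=> xi xi_skew xi_exp.
have xi_g : xi *m g = g *m xi by rewrite -xi_exp skew_hermitian_mx_comm_mexp.
by rewrite /lie_bracket -(uconj_diag_comm_map V_unitary) -?gE ?subrr.
Qed.
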